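(* Let $d=2$, let $\mathcal S$ be the set of $2\times 2$ density operators, and let $\mathrm d\rho$ be a probability measure on $\mathcal S$. Put $\hat\rho=\mathbb E_\rho[\rho]$ and $p_\rho=\mathbb E_\rho\big[\sqrt{1-\mathrm{Tr}(\rho^2)}\big]$. Then $$\max_{\sigma\in\mathcal S}\mathbb E_\rho[F(\rho,\sigma)]=\frac12\left(1+\sqrt{2\big(p_\rho^2+\mathrm{Tr}(\hat\rho^2)\big)-1}\right),$$ and, whenever $2(p_\rho^2+\mathrm{Tr}(\hat\rho^2))-1>0$, the operator $$\sigma^\sharp=\tfrac12\mathbb 1+\sqrt{\frac{1}{2(p_\rho^2+\mathrm{Tr}(\hat\rho^2))-1}}\Big(\hat\rho-\tfrac12\mathbb 1\Big)$$ is a density operator attaining this maximum.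
   Context: The fidelity of $\rho,\sigma\in\mathcal S$ is $F(\rho,\sigma)=\big[\mathrm{Tr}\sqrt{\sqrt\rho\,\sigma\sqrt\rho}\big]^2$. $\mathbb E_\rho$ denotes expectation with respect to $\mathrm d\rho$; $\mathbb 1$ is the $2\times2$ identity. *)

From HB Require Import structures.
From mathcomp Require Import all_boot all_order all_algebra.
From mathcomp Require Import all_classical all_reals all_analysis.
From mathcomp.real_closed Require Import complex.
Set Implicit Arguments. Unset Strict Implicit. Unset Printing Implicit Defensive.
Import Order.TTheory GRing.Theory Num.Theory.
Local Open Scope ring_scope.
Local Open Scope classical_set_scope.

Section Defs.
Variable R : realType.
Local Notation C := (R[i]).

Definition adj_mx m n (A : 'M[C]_(m, n)) : 'M[C]_(n, m) := (map_mx (@conjc R) A)^T.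

Definition hermitian n (A : 'M[C]_n) : Prop := adj_mx A = A.

(* positive semidefinite: v^* A v >= 0 (in the order of C, i.e. real and
   nonnegative) for every column vector v *)
Definition psd n (A : 'M[C]_n) : Prop :=
  hermitian A /\ forall v : 'cV[C]_n, 0 <= ((adj_mx v) *m A *m v) 0 0.

Definition density n (A : 'M[C]_n) : Prop := psd A /\ \tr A = 1.

Definition msqrt n (A : 'M[C]_n) : 'M[C]_n :=
  xget 0 [set B : 'M[C]_n | psd B /\ B *m B = A].

(* fidelity F(rho,sigma) = [Tr sqrt(sqrt rho sigma sqrt rho)]^2; the trace
   of a PSD matrix is real, so we take its real part *)
Definition fidelity n (rho sigma : 'M[C]_n) : R :=
  (complex.Re (\tr (msqrt (msqrt rho *m sigma *m msqrt rho)))) ^+ 2.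

Definition expect d (T : measurableType d) (P : probability T R) (f : T -> R) : R :=
  Rintegral P setT f.

Definition mexpect d (T : measurableType d) (P : probability T R) n
  (X : T -> 'M[C]_n) : 'M[C]_n :=
  \matrix_(i, j) (complex.Complex (expect P (fun t => complex.Re (X t i j)))
                          (expect P (fun t => complex.Im (X t i j)))).

Definition random_density d (T : measurableType d) n (X : T -> 'M[C]_n) : Prop :=
  (forall t, density (X t)) /\
  (forall i j, measurable_fun setT (fun t => complex.Re (X t i j)) /\
               measurable_fun setT (fun t => complex.Im (X t i j))).
End Defs.

From Pilot Require Import Defs.
From HB Require Import structures.
From mathcomp Require Import all_boot all_order all_algebra.
From mathcomp Require Import all_classical all_reals all_analysis.
From mathcomp.real_closed Require Import complex.
From mathcomp Require Import ring lra measurable_realfun.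
Set Implicit Arguments. Unset Strict Implicit. Unset Printing Implicit Defensive.
Import Order.TTheory GRing.Theory Num.Theory.
Local Open Scope ring_scope.

(* Write a qubit state as rho = (1 + r.sigma)/2 with a Bloch vector r, |r| <= 1, and lift r to
   the unit vector r^ = (r, sqrt (1 - |r|^2)) on the upper hemisphere of S^3.  Since
   F(rho, sigma) = Tr (rho sigma) + 2 sqrt (det rho det sigma) for qubits, the fidelity is
   (1 + <r^, s^>)/2, so the average fidelity is (1 + <u, s^>)/2 with u = E[r^].  By
   Cauchy-Schwarz this is at most (1 + |u|)/2, with equality at s^ = u/|u|, which again lies
   on the upper hemisphere and is the lifted Bloch vector of sigma#.  Finally |u|^2 is the
   stated quantity: the first three coordinates of u form the Bloch vector of E[rho], and
   the last one is sqrt 2 p_rho because 1 - Tr (rho^2) = 2 det rho. *)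

Section Dot.
Variable R : rcfType.
Implicit Types (n : nat) (u v w : nat -> R).

Definition dot n u v : R := \sum_(i < n) u i * v i.

Lemma dotS n u v : dot n.+1 u v = dot n u v + u n * v n.
Proof. by rewrite /dot big_ord_recr. Qed.

Lemma dot3E u v : dot 3 u v = u 0%N * v 0%N + u 1%N * v 1%N + u 2%N * v 2%N.
Proof. by rewrite !dotS /dot big_ord0 add0r. Qed.

Lemma eq_dot n u u' v : (forall i, (i < n)%N -> u i = u' i) -> dot n u v = dot n u' v.
Proof. by move=> h; apply: eq_bigr => i _; rewrite h. Qed.

Lemma dotC n u v : dot n u v = dot n v u.
Proof. by apply: eq_bigr => i _; rewrite mulrC. Qed.

Lemma dotZl n k u v : dot n (fun i => k * u i) v = k * dot n u v.
Proof. by rewrite /dot mulr_sumr; apply: eq_bigr => i _; rewrite mulrA. Qed.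

Lemma dot_ge0 n u : 0 <= dot n u u.
Proof. by apply: sumr_ge0 => i _; rewrite -expr2 sqr_ge0. Qed.

Lemma sqr_coord_le_dot n u i : (i < n)%N -> u i ^+ 2 <= dot n u u.
Proof.
move=> lt_in; rewrite /dot (bigD1 (Ordinal lt_in)) //= -expr2 lerDl.
by apply: sumr_ge0 => j _; rewrite -expr2 sqr_ge0.
Qed.

(* Expand 0 <= \sum_i (u_i - <u,s> s_i)^2. *)
Lemma sqr_dot_le n u s : dot n s s = 1 -> dot n u s ^+ 2 <= dot n u u.
Proof.
move=> s1; set a := dot n u s.
have : 0 <= \sum_(i < n) (u i - a * s i) ^+ 2 by apply: sumr_ge0 => i _; exact: sqr_ge0.
suff -> : \sum_(i < n) (u i - a * s i) ^+ 2 = dot n u u - a ^+ 2 by rewrite subr_ge0.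
have -> : \sum_(i < n) (u i - a * s i) ^+ 2 =
  dot n u u - (a *+ 2) * dot n u s + a ^+ 2 * dot n s s.
  rewrite /dot mulr_sumr mulr_sumr -sumrB -big_split /=.
  by apply: eq_bigr => i _; ring.
by rewrite s1 -/a; ring.
Qed.

Lemma dot_le_sqrt n u s : dot n s s = 1 -> dot n u s <= Num.sqrt (dot n u u).
Proof.
move=> /(sqr_dot_le u) h; case: (lerP (dot n u s) 0) => [le0|gt0].
  exact: le_trans le0 (sqrtr_ge0 _).
by rewrite -(ger0_norm (ltW gt0)) -sqrtr_sqr ler_wsqrtr.
Qed.

Definition sphere_lift n u i : R := if i == n then Num.sqrt (1 - dot n u u) else u i.

Lemma dot_sphere_liftl n u v :
  dot n.+1 (sphere_lift n u) v = dot n u v + Num.sqrt (1 - dot n u u) * v n.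
Proof.
rewrite dotS /sphere_lift eqxx; congr (_ + _); apply: eq_dot => i lt_in.
by rewrite ifN // ltn_eqF.
Qed.

Lemma dot_sphere_lift2 n u v :
  dot n.+1 (sphere_lift n u) (sphere_lift n v) =
  dot n u v + Num.sqrt (1 - dot n u u) * Num.sqrt (1 - dot n v v).
Proof.
rewrite dot_sphere_liftl {2}/sphere_lift eqxx; congr (_ + _); rewrite dotC [RHS]dotC.
by apply: eq_dot => i lt_in; rewrite /sphere_lift ifN // ltn_eqF.
Qed.

Lemma dot_sphere_lift_self n u : dot n u u <= 1 -> dot n.+1 (sphere_lift n u) (sphere_lift n u) = 1.
Proof.
by move=> u1; rewrite dot_sphere_lift2 -expr2 sqr_sqrtr ?subr_ge0 // addrC subrK.
Qed.

Lemma dot_sphere_lift_normalized n u : 0 <= u n -> 0 < dot n.+1 u u ->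
  let k := (Num.sqrt (dot n.+1 u u))^-1 in
  dot n (fun i => k * u i) (fun i => k * u i) <= 1 /\
  dot n.+1 u (sphere_lift n (fun i => k * u i)) = Num.sqrt (dot n.+1 u u).
Proof.
move=> un_ge0 c_gt0 k; set c := dot n.+1 u u.
have k_ge0 : 0 <= k by rewrite invr_ge0 sqrtr_ge0.
have k2c : k ^+ 2 * c = 1 by rewrite exprVn sqr_sqrtr ?mulVf ?gt_eqF // ltW.
have scaled : dot n (fun i => k * u i) (fun i => k * u i) = k ^+ 2 * dot n u u.
  by rewrite dotZl dotC dotZl mulrA -expr2.
have cE : c = dot n u u + u n ^+ 2 by rewrite /c dotS expr2.
have last_coord : Num.sqrt (1 - k ^+ 2 * dot n u u) = k * u n.
  by rewrite -k2c cE -mulrBr addrC addKr -exprMn sqrtr_sqr ger0_norm // mulr_ge0.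
split; first by rewrite scaled -k2c ler_wpM2l ?sqr_ge0 // cE lerDl sqr_ge0.
rewrite dotC dot_sphere_liftl scaled last_coord dotZl.
have -> : k * dot n u u + k * u n * u n = k * c by rewrite cE; ring.
have sqrt_c : c = Num.sqrt c ^+ 2 by rewrite sqr_sqrtr // ltW.
rewrite {1}sqrt_c expr2 mulrA mulVf ?mul1r //.
by rewrite sqrtr_eq0 -ltNge.
Qed.

End Dot.

Section Expectation.
Variables (R : realType) (d : measure_display) (T : measurableType d).
Variable P : probability T R.
Implicit Types (f g : T -> R).

Definition bounded_measurable f :=
  measurable_fun setT f /\ exists M, forall t, `|f t| <= M.

Lemma bounded_measurable_cst k : bounded_measurable (fun=> k).
Proof. by split; [exact: measurable_cst | exists `|k|]. Qed.

Lemma bounded_measurableD f g : bounded_measurable f -> bounded_measurable g ->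
  bounded_measurable (fun t => f t + g t).
Proof.
move=> [mf [M fM]] [mg [N gN]]; split; first exact: measurable_funD.
by exists (M + N) => t; rewrite (le_trans (ler_normD _ _)) // lerD.
Qed.

Lemma bounded_measurableB f g : bounded_measurable f -> bounded_measurable g ->
  bounded_measurable (fun t => f t - g t).
Proof.
move=> [mf [M fM]] [mg [N gN]]; split; first exact: measurable_funB.
by exists (M + N) => t; rewrite (le_trans (ler_normB _ _)) // lerD.
Qed.

Lemma bounded_measurableM f g : bounded_measurable f -> bounded_measurable g ->
  bounded_measurable (fun t => f t * g t).
Proof.
move=> [mf [M fM]] [mg [N gN]]; split; first exact: measurable_funM.
by exists (M * N) => t; rewrite normrM ler_pM.
Qed.

Lemma bounded_measurable_sqrt f : bounded_measurable f ->
  bounded_measurable (fun t => Num.sqrt (f t)).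
Proof.
move=> [mf [M fM]]; split.
  exact: measurableT_comp (continuous_measurable_fun (@sqrt_continuous R)) mf.
exists (Num.sqrt M) => t; rewrite ger0_norm ?sqrtr_ge0 //.
by rewrite ler_wsqrtr // (le_trans (ler_norm _)).
Qed.

Lemma bounded_measurable_sum n (F : nat -> T -> R) :
  (forall i, (i < n)%N -> bounded_measurable (F i)) ->
  bounded_measurable (fun t => \sum_(i < n) F i t).
Proof.
elim: n => [|n IHn] FB.
  under eq_fun do rewrite big_ord0; exact: bounded_measurable_cst.
under eq_fun do rewrite big_ord_recr /=.
apply: bounded_measurableD (FB n _) => //.
by apply: IHn => i lt_in; apply: FB; exact: ltnW.
Qed.

Lemma bounded_measurable_integrable f : bounded_measurable f ->
  P.-integrable setT (EFin \o f).
Proof.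
move=> [mf [M fM]]; apply: measurable_bounded_integrable => //.
  by rewrite /= probability_setT ltry.
exists M; split; first exact: num_real.
by move=> x Mx t _ /=; rewrite (le_trans (fM t)) // ltW.
Qed.

Lemma eq_expect f g : f =1 g -> expect P f = expect P g.
Proof. by move=> /funext ->. Qed.

Lemma expect_cst k : expect P (fun=> k) = k.
Proof. by rewrite /expect Rintegral_cst //= probability_setT /= mulr1. Qed.

Lemma expectD f g : bounded_measurable f -> bounded_measurable g ->
  expect P (fun t => f t + g t) = expect P f + expect P g.
Proof. by move=> bf bg; apply: RintegralD => //; exact: bounded_measurable_integrable. Qed.

Lemma expectB f g : bounded_measurable f -> bounded_measurable g ->
  expect P (fun t => f t - g t) = expect P f - expect P g.
Proof. by move=> bf bg; apply: RintegralB => //; exact: bounded_measurable_integrable. Qed.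

Lemma expectZl k f : bounded_measurable f -> expect P (fun t => k * f t) = k * expect P f.
Proof. by move=> bf; apply: RintegralZl => //; exact: bounded_measurable_integrable. Qed.

Lemma expect_sum n (F : nat -> T -> R) :
  (forall i, (i < n)%N -> bounded_measurable (F i)) ->
  expect P (fun t => \sum_(i < n) F i t) = \sum_(i < n) expect P (F i).
Proof.
elim: n => [|n IHn] FB.
  by under eq_fun do rewrite big_ord0; rewrite big_ord0 expect_cst.
have FBn i : (i < n)%N -> bounded_measurable (F i) by move=> lt_in; apply: FB; exact: ltnW.
under eq_fun do rewrite big_ord_recr /=.
by rewrite (expectD (bounded_measurable_sum FBn) (FB n (ltnSn n))) (IHn FBn) big_ord_recr.
Qed.

Lemma expect_dot n (F : T -> nat -> R) w :
  (forall i, (i < n)%N -> bounded_measurable (F^~ i)) ->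
  expect P (fun t => dot n (F t) w) = dot n (fun i => expect P (F^~ i)) w.
Proof.
move=> FB.
have FwB i : (i < n)%N -> bounded_measurable (fun t => F t i * w i).
  by move=> lt_in; apply: bounded_measurableM (FB i lt_in) (bounded_measurable_cst _).
rewrite /dot (expect_sum (F := fun i t => F t i * w i) FwB).
apply: eq_bigr => i _; rewrite mulrC -(expectZl _ (FB i (ltn_ord i))).
by apply: eq_expect => t; rewrite mulrC.
Qed.

Lemma expectN f : bounded_measurable f -> expect P (fun t => - f t) = - expect P f.
Proof.
by move=> bf; rewrite -mulN1r -expectZl //; apply: eq_expect => t; rewrite mulN1r.
Qed.

Lemma expect_ge0 f : (forall t, 0 <= f t) -> 0 <= expect P f.
Proof. by move=> f_ge0; apply: Rintegral_ge0 => t _; exact: f_ge0. Qed.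

End Expectation.

Lemma eq_mx2 (K : Type) (A B : 'M[K]_2) :
  A 0 0 = B 0 0 -> A 0 1 = B 0 1 -> A 1 0 = B 1 0 -> A 1 1 = B 1 1 -> A = B.
Proof.
have ord2 (i : 'I_2) : i = 0 \/ i = 1 by case: i => [[|[|//]] ?]; [left|right]; apply/val_inj.
move=> e00 e01 e10 e11; apply/matrixP => i j.
by case: (ord2 i) => ->; case: (ord2 j) => ->.
Qed.

Lemma sum_ord2 (K : nmodType) (F : 'I_2 -> K) : \sum_(i < 2) F i = F 0 + F 1.
Proof. by rewrite big_ord_recl big_ord1; congr (F _ + F _); apply/val_inj. Qed.

Lemma mulmx2E (K : pzRingType) m n (A : 'M[K]_(m, 2)) (B : 'M[K]_(2, n)) i j :
  (A *m B) i j = A i 0 * B 0 j + A i 1 * B 1 j.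
Proof. by rewrite !mxE sum_ord2. Qed.

Lemma mxtrace2 (K : pzRingType) (A : 'M[K]_2) : \tr A = A 0 0 + A 1 1.
Proof. by rewrite /mxtrace sum_ord2. Qed.

Lemma det_mx2 (K : comPzRingType) (A : 'M[K]_2) : \det A = A 0 0 * A 1 1 - A 0 1 * A 1 0.
Proof.
rewrite (expand_det_row _ 0) sum_ord2 /cofactor !det_mx11 !mxE.
have -> : lift 0 0 = 1 :> 'I_2 by apply/val_inj.
have -> : lift 1 0 = 0 :> 'I_2 by apply/val_inj.
by rewrite expr0 expr1 mul1r mulN1r mulrN.
Qed.

Definition mx2 (K : Type) (p q r s : K) : 'M[K]_2 :=
  \matrix_(i, j) if i == 0 then (if j == 0 then p else q) else (if j == 0 then r else s).

Lemma mx2E (K : Type) (p q r s : K) :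
  [/\ mx2 p q r s 0 0 = p, mx2 p q r s 0 1 = q, mx2 p q r s 1 0 = r & mx2 p q r s 1 1 = s].
Proof. by rewrite !mxE. Qed.

Local Open Scope complex_scope.
Local Notation Re := (@complex.Re _).
Local Notation Im := (@complex.Im _).

Section ComplexParts.
Variable R : rcfType.
Implicit Types x y : R[i].

Lemma complexP x y : Re x = Re y -> Im x = Im y -> x = y.
Proof. by case: x; case: y => ? ? ? ? /= -> ->. Qed.

Lemma ReD x y : Re (x + y) = Re x + Re y. Proof. by case: x; case: y. Qed.
Lemma ImD x y : Im (x + y) = Im x + Im y. Proof. by case: x; case: y. Qed.
Lemma ReN x : Re (- x) = - Re x. Proof. by case: x. Qed.
Lemma ImN x : Im (- x) = - Im x. Proof. by case: x. Qed.
Lemma ReM x y : Re (x * y) = Re x * Re y - Im x * Im y.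
Proof. by case: x => a b; case: y => c d /=; ring. Qed.
Lemma ImM x y : Im (x * y) = Re x * Im y + Im x * Re y.
Proof. by case: x => a b; case: y => c d /=; ring. Qed.
Lemma ReJ x : Re x^* = Re x. Proof. by case: x. Qed.
Lemma ImJ x : Im x^* = - Im x. Proof. by case: x. Qed.

End ComplexParts.

Definition ReIm := (ReD, ImD, ReN, ImN, ReM, ImM, ReJ, ImJ).

Section Qubit.
Variable R : realType.
Local Notation C := R[i].

Definition Hmx (a b x y : R) : 'M[C]_2 := mx2 a%:C (x +i* y) (x -i* y) b%:C.

Lemma HmxE a b x y : [/\ Hmx a b x y 0 0 = a%:C, Hmx a b x y 0 1 = x +i* y,
  Hmx a b x y 1 0 = x -i* y & Hmx a b x y 1 1 = b%:C].
Proof. exact: mx2E. Qed.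

Lemma adj_mxE m n (A : 'M[C]_(m, n)) i j : adj_mx A i j = (A j i)^*.
Proof. by rewrite /adj_mx !mxE. Qed.

Lemma adj_mxM m n p (A : 'M[C]_(m, n)) (B : 'M[C]_(n, p)) :
  adj_mx (A *m B) = adj_mx B *m adj_mx A.
Proof. by rewrite /adj_mx map_mxM trmx_mul. Qed.

Lemma hermitian_Hmx a b x y : Defs.hermitian (Hmx a b x y).
Proof.
have [e00 e01 e10 e11] := HmxE a b x y.
apply: eq_mx2; rewrite adj_mxE ?e00 ?e01 ?e10 ?e11.
all: by apply: complexP; rewrite /= ?opprK ?oppr0.
Qed.

Lemma hermitian_HmxE (A : 'M[C]_2) : Defs.hermitian A ->
  A = Hmx (Re (A 0 0)) (Re (A 1 1)) (Re (A 0 1)) (Im (A 0 1)).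
Proof.
move=> hA; have E i j : A i j = (A j i)^* by rewrite -{1}hA adj_mxE.
have [e00 e01 e10 e11] := HmxE (Re (A 0 0)) (Re (A 1 1)) (Re (A 0 1)) (Im (A 0 1)).
have real_diag i : Im (A i i) = 0.
  by have := congr1 Im (E i i); rewrite ImJ => h; lra.
apply: eq_mx2; rewrite ?e00 ?e01 ?e10 ?e11; apply: complexP => //=;
  rewrite ?real_diag // (E 1 0) ?ReJ ?ImJ //.
Qed.

Definition qform (a b x y p q r s : R) :=
  a * (p ^+ 2 + q ^+ 2) + b * (r ^+ 2 + s ^+ 2) + 2 * ((p * x + q * y) * r - (p * y - q * x) * s).

Lemma qform_Hmx a b x y (v : 'cV[C]_2) :
  (adj_mx v *m Hmx a b x y *m v) 0 0 =
  (qform a b x y (Re (v 0 0)) (Im (v 0 0)) (Re (v 1 0)) (Im (v 1 0)))%:C.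
Proof.
have [e00 e01 e10 e11] := HmxE a b x y.
rewrite !mulmx2E !adj_mxE e00 e01 e10 e11 /qform.
by case: (v 0 0) => p q; case: (v 1 0) => r s; apply: complexP; rewrite !ReIm /=; ring.
Qed.

Lemma psd_HmxP a b x y :
  psd (Hmx a b x y) <-> [/\ 0 <= a, 0 <= b & x ^+ 2 + y ^+ 2 <= a * b].
Proof.
split.
- case=> _ H.
  have Q u w : 0 <= qform a b x y (Re u) (Im u) (Re w) (Im w).
    by move: (H (\col_i if i == 0 then u else w)); rewrite qform_Hmx !mxE ler0c.
  have ha := Q 1 0; have hb := Q 0 1; have h0 := Q (- (x +i* y)) 1.
  have h1 := Q (- (x +i* y)) a%:C; have h2 := Q b%:C (- x +i* y).
  rewrite /qform /= in ha hb h0 h1 h2.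
  have a_ge0 : 0 <= a by nra.
  have b_ge0 : 0 <= b by nra.
  split => //; have [ab0|ab_neq0] := eqVneq (a + b) 0.
    have a0 : a = 0 by lra.
    have b0 : b = 0 by lra.
    by subst a b; nra.
  have : 0 < a + b by rewrite lt_neqAle eq_sym ab_neq0 addr_ge0.
  nra.
- case=> a_ge0 b_ge0 det_ge0; split; first exact: hermitian_Hmx.
  move=> v; rewrite qform_Hmx ler0c /qform.
  move: (Re (v 0 0)) (Im (v 0 0)) (Re (v 1 0)) (Im (v 1 0)) => p q r s.
  have [a0|a_neq0] := eqVneq a 0.
    subst a; have x0 : x = 0 by nra.
    have y0 : y = 0 by nra.
    by subst x y; nra.
  (* completing the square in (p, q) *)
  have a_gt0 : 0 < a by rewrite lt_neqAle eq_sym a_neq0.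
  rewrite -(pmulr_rge0 _ a_gt0).
  have -> : a * (a * (p ^+ 2 + q ^+ 2) + b * (r ^+ 2 + s ^+ 2) +
      2 * ((p * x + q * y) * r - (p * y - q * x) * s)) =
    (a * p + x * r - y * s) ^+ 2 + (a * q + x * s + y * r) ^+ 2 +
      (a * b - x ^+ 2 - y ^+ 2) * (r ^+ 2 + s ^+ 2) by ring.
  have D_ge0 : 0 <= a * b - x ^+ 2 - y ^+ 2 by lra.
  apply: addr_ge0; first by rewrite addr_ge0 ?sqr_ge0.
  by apply: mulr_ge0 => //; rewrite addr_ge0 ?sqr_ge0.
Qed.

Lemma psd_HmxE (A : 'M[C]_2) : psd A -> exists a b x y,
  A = Hmx a b x y /\ [/\ 0 <= a, 0 <= b & x ^+ 2 + y ^+ 2 <= a * b].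
Proof.
move=> A_psd; have A_E := hermitian_HmxE A_psd.1.
by do 4 eexists; split; [exact: A_E | apply/psd_HmxP; rewrite -A_E].
Qed.

Lemma mxtrace_Hmx a b x y : \tr (Hmx a b x y) = (a + b)%:C.
Proof. by have [e00 _ _ e11] := HmxE a b x y; rewrite mxtrace2 e00 e11 rmorphD. Qed.

Lemma det_Hmx a b x y : \det (Hmx a b x y) = (a * b - x ^+ 2 - y ^+ 2)%:C.
Proof.
have [e00 e01 e10 e11] := HmxE a b x y.
by rewrite det_mx2 e00 e01 e10 e11; apply: complexP; rewrite !ReIm /=; ring.
Qed.

Lemma Re_mxtrace_mulHmx a b x y a' b' x' y' :
  Re (\tr (Hmx a b x y *m Hmx a' b' x' y')) = a * a' + b * b' + 2 * (x * x' + y * y').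
Proof.
have [e00 e01 e10 e11] := HmxE a b x y; have [f00 f01 f10 f11] := HmxE a' b' x' y'.
by rewrite mxtrace2 !mulmx2E e00 e01 e10 e11 f00 f01 f10 f11 !ReIm /=; ring.
Qed.

Lemma Hmx_sqr a b x y : Hmx a b x y *m Hmx a b x y =
  Hmx (a ^+ 2 + x ^+ 2 + y ^+ 2) (b ^+ 2 + x ^+ 2 + y ^+ 2) ((a + b) * x) ((a + b) * y).
Proof.
have [e00 e01 e10 e11] := HmxE a b x y.
have [f00 f01 f10 f11] := HmxE (a ^+ 2 + x ^+ 2 + y ^+ 2) (b ^+ 2 + x ^+ 2 + y ^+ 2)
  ((a + b) * x) ((a + b) * y).
by apply: eq_mx2; rewrite !mulmx2E ?e00 ?e01 ?e10 ?e11 ?f00 ?f01 ?f10 ?f11;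
  apply: complexP; rewrite !ReIm /=; ring.
Qed.

Lemma psd_conj_mul (S A : 'M[C]_2) : psd S -> psd A -> psd (S *m A *m S).
Proof.
move=> [S_herm _] [A_herm A_ge0]; split.
  by rewrite /Defs.hermitian !adj_mxM S_herm A_herm mulmxA.
by move=> v; have := A_ge0 (S *m v); rewrite adj_mxM S_herm !mulmxA.
Qed.

(* With s = sqrt (det M) and t = tr M + 2 s, the root is (M + s) / sqrt t. *)
Lemma psd_sqrt_exists (M : 'M[C]_2) : psd M -> exists B, psd B /\ B *m B = M.
Proof.
case/psd_HmxE => [a [b [x [y [-> [a_ge0 b_ge0 det_ge0]]]]]].
set s := Num.sqrt (a * b - x ^+ 2 - y ^+ 2).
have s_ge0 : 0 <= s := sqrtr_ge0 _.
have s2 : s ^+ 2 = a * b - x ^+ 2 - y ^+ 2 by rewrite sqr_sqrtr //; lra.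
have [t0|t_neq0] := eqVneq (a + b + 2 * s) 0.
  have a0 : a = 0 by lra.
  have b0 : b = 0 by lra.
  have x0 : x = 0 by nra.
  have y0 : y = 0 by nra.
  exists (Hmx 0 0 0 0); split; first by apply/psd_HmxP; rewrite expr0n mulr0 addr0.
  by rewrite Hmx_sqr a0 b0 x0 y0 /= !(expr0n, mulr0, addr0).
have t_gt0 : 0 < a + b + 2 * s by rewrite lt_neqAle eq_sym t_neq0 /=; lra.
set k := (Num.sqrt (a + b + 2 * s))^-1.
have k_ge0 : 0 <= k by rewrite invr_ge0 sqrtr_ge0.
have k2 : k ^+ 2 * (a + b + 2 * s) = 1 by rewrite exprVn sqr_sqrtr ?mulVf ?gt_eqF // ltW.
exists (Hmx (k * (a + s)) (k * (b + s)) (k * x) (k * y)); split.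
  by apply/psd_HmxP; split; nra.
rewrite Hmx_sqr; congr Hmx.
- by rewrite -[RHS]mul1r -k2; nra.
- by rewrite -[RHS]mul1r -k2; nra.
- by rewrite -[RHS]mul1r -k2; ring.
- by rewrite -[RHS]mul1r -k2; ring.
Qed.

Lemma msqrtP (M : 'M[C]_2) : psd M -> psd (msqrt M) /\ msqrt M *m msqrt M = M.
Proof. by move=> /psd_sqrt_exists; exact: xgetPex. Qed.

Lemma Re_mxtrace_psd_sqrt (B : 'M[C]_2) : psd B ->
  Re (\tr B) = Num.sqrt (Re (\tr (B *m B)) + 2 * Num.sqrt (Re (\det (B *m B)))).
Proof.
case/psd_HmxE => [a [b [x [y [-> [a_ge0 b_ge0 det_ge0]]]]]].
rewrite det_mulmx det_Hmx Re_mxtrace_mulHmx mxtrace_Hmx -rmorphM /= -expr2.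
rewrite sqrtr_sqr ger0_norm; last lra.
have -> : a * a + b * b + 2 * (x * x + y * y) + 2 * (a * b - x ^+ 2 - y ^+ 2) = (a + b) ^+ 2.
  by ring.
by rewrite sqrtr_sqr ger0_norm //; lra.
Qed.

Lemma fidelity_psd (A B : 'M[C]_2) : psd A -> psd B ->
  fidelity A B = Re (\tr (A *m B)) + 2 * Num.sqrt (Re (\det A) * Re (\det B)).
Proof.
move=> A_psd B_psd; have [S_psd S2] := msqrtP A_psd.
set S := msqrt A in S_psd S2 *.
have M_psd := psd_conj_mul S_psd B_psd.
have [root_psd root2] := msqrtP M_psd.
rewrite /fidelity -/S (Re_mxtrace_psd_sqrt root_psd) root2.
have trM : \tr (S *m B *m S) = \tr (A *m B) by rewrite mxtrace_mulC mulmxA S2.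
have detM : \det (S *m B *m S) = \det A * \det B by rewrite !det_mulmx -S2 det_mulmx; ring.
have tr_ge0 : 0 <= Re (\tr (A *m B)).
  have [aM [bM [xM [yM [M_E [aM_ge0 bM_ge0 _]]]]]] := psd_HmxE M_psd.
  by rewrite -trM M_E mxtrace_Hmx /=; lra.
rewrite trM detM sqr_sqrtr; last by rewrite addr_ge0 ?mulr_ge0 ?sqrtr_ge0.
have [a [b [x [y [-> _]]]]] := psd_HmxE A_psd.
have [a' [b' [x' [y' [-> _]]]]] := psd_HmxE B_psd.
by rewrite !det_Hmx -rmorphM.
Qed.

Definition bloch (A : 'M[C]_2) : nat -> R :=
  nth 0 [:: Re (A 0 0) - Re (A 1 1); 2 * Re (A 0 1); 2 * Im (A 0 1)].

Definition of_bloch (r : nat -> R) : 'M[C]_2 :=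
  Hmx (2^-1 * (1 + r 0%N)) (2^-1 * (1 - r 0%N)) (2^-1 * r 1%N) (2^-1 * r 2%N).

Lemma det_of_bloch r : \det (of_bloch r) = (4^-1 * (1 - dot 3 r r))%:C.
Proof. by rewrite det_Hmx dot3E; congr (_%:C); field. Qed.

Lemma density_of_blochP r : density (of_bloch r) <-> dot 3 r r <= 1.
Proof.
have tr1 : \tr (of_bloch r) = 1 by rewrite mxtrace_Hmx; congr (_%:C); field.
rewrite /density psd_HmxP dot3E; split=> [[[a_ge0 b_ge0 det_ge0] _]|r1]; first nra.
by split=> //; split; nra.
Qed.

Lemma density_bloch A : density A -> A = of_bloch (bloch A) /\ dot 3 (bloch A) (bloch A) <= 1.
Proof.
move=> A_density; case: (A_density) => [[A_herm _] trA].
have A_E := hermitian_HmxE A_herm.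
have tr1 : Re (A 0 0) + Re (A 1 1) = 1.
  by move/(congr1 Re): trA; rewrite {1}A_E mxtrace_Hmx.
have A_bloch : A = of_bloch (bloch A).
  by rewrite {1}A_E /of_bloch /bloch /=; congr Hmx; lra.
by split=> //; apply/density_of_blochP; rewrite -A_bloch.
Qed.

Lemma Re_mxtrace_of_bloch r s :
  Re (\tr (of_bloch r *m of_bloch s)) = 2^-1 * (1 + dot 3 r s).
Proof. by rewrite Re_mxtrace_mulHmx dot3E; field. Qed.

Lemma fidelity_of_bloch r s : dot 3 r r <= 1 -> dot 3 s s <= 1 ->
  fidelity (of_bloch r) (of_bloch s) = 2^-1 * (1 + dot 4 (sphere_lift 3 r) (sphere_lift 3 s)).
Proof.
move=> r1 s1; have [[_ r_psd] [_ s_psd]] := (density_of_blochP r, density_of_blochP s).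
rewrite (fidelity_psd (r_psd r1).1 (s_psd s1).1) Re_mxtrace_of_bloch !det_of_bloch /=.
rewrite dot_sphere_lift2 mulrACA -expr2 sqrtrM ?sqr_ge0 // sqrtr_sqr ger0_norm ?invr_ge0 // sqrtrM ?subr_ge0 //.
by field.
Qed.

Lemma depolarize_of_bloch k r :
  2^-1%:M + (k%:C)%C *: (of_bloch r - 2^-1%:M) = of_bloch (fun i => k * r i).
Proof.
have half : (2^-1 : C) = (2^-1 : R)%:C by rewrite fmorphV rmorph_nat.
apply: eq_mx2; rewrite /of_bloch /Hmx /mx2 !mxE half /= ?mulr1n ?mulr0n;
  apply: complexP; rewrite !ReIm /=; ring.
Qed.

Lemma mexpect_Hmx d (T : measurableType d) (P : probability T R) (a b x y : T -> R) :
  bounded_measurable y ->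
  mexpect P (fun t => Hmx (a t) (b t) (x t) (y t)) =
  Hmx (expect P a) (expect P b) (expect P x) (expect P y).
Proof.
move=> yB; apply: eq_mx2; rewrite /mexpect /Hmx /mx2 !mxE /=; apply: complexP => /=;
  under eq_expect do rewrite mxE /=.
all: by rewrite ?expect_cst ?expectN.
Qed.

End Qubit.

Section RandomDensity.
Variables (R : realType) (d : measure_display) (T : measurableType d).
Variables (P : probability T R) (X : T -> 'M[R[i]]_2).
Hypothesis X_random : random_density X.

Lemma random_density_bloch t :
  X t = of_bloch (bloch (X t)) /\ dot 3 (bloch (X t)) (bloch (X t)) <= 1.
Proof. exact: density_bloch (X_random.1 t). Qed.

Lemma bounded_measurable_bloch i : (i < 3)%N -> bounded_measurable (fun t => bloch (X t) i).
Proof.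
move=> lt_i3; split.
  have mRe i' j := (X_random.2 i' j).1; have mIm i' j := (X_random.2 i' j).2.
  case: i lt_i3 => [|[|[|//]]] _ /=.
  - exact: measurable_funB (mRe 0 0) (mRe 1 1).
  - by apply: measurable_funM; [exact: measurable_cst | exact: mRe 0 1].
  - by apply: measurable_funM; [exact: measurable_cst | exact: mIm 0 1].
exists 1 => t; rewrite -sqrtr_sqr -sqrtr1 ler_wsqrtr //.
exact: le_trans (sqr_coord_le_dot _ lt_i3) (random_density_bloch t).2.
Qed.

Lemma bounded_measurable_sphere_lift i : (i < 4)%N ->
  bounded_measurable (fun t => sphere_lift 3 (bloch (X t)) i).
Proof.
rewrite ltnS leq_eqVlt => /orP[/eqP->|lt_i3]; last first.
  have -> : (fun t => sphere_lift 3 (bloch (X t)) i) = (fun t => bloch (X t) i).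
    by apply: funext => t; rewrite /sphere_lift ifN // ltn_eqF.
  exact: bounded_measurable_bloch.
change (bounded_measurable (fun t => Num.sqrt (1 - dot 3 (bloch (X t)) (bloch (X t))))).
apply/bounded_measurable_sqrt/bounded_measurableB; first exact: bounded_measurable_cst.
apply: (bounded_measurable_sum (F := fun j t => bloch (X t) j * bloch (X t) j)) => j lt_j3.
exact: bounded_measurableM (bounded_measurable_bloch lt_j3) (bounded_measurable_bloch lt_j3).
Qed.

Definition mean_sphere_lift : nat -> R :=
  fun i => expect P (fun t => sphere_lift 3 (bloch (X t)) i).

Lemma mean_sphere_lift_ge0 : 0 <= mean_sphere_lift 3.
Proof. by apply: expect_ge0 => t; rewrite /sphere_lift /= sqrtr_ge0. Qed.

Lemma mexpect_random_density : mexpect P X = of_bloch mean_sphere_lift.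
Proof.
have b i (lt_i3 : (i < 3)%N) := bounded_measurable_bloch lt_i3.
have one := bounded_measurable_cst T (1 : R).
have -> : X = fun t => of_bloch (bloch (X t)).
  by apply: funext => t; exact: (random_density_bloch t).1.
rewrite /of_bloch mexpect_Hmx; last first.
  exact: bounded_measurableM (bounded_measurable_cst _ _) (b 2%N isT).
congr Hmx.
- rewrite (expectZl P _ (bounded_measurableD one (b 0%N isT))).
  by rewrite (expectD P one (b 0%N isT)) expect_cst.
- rewrite (expectZl P _ (bounded_measurableB one (b 0%N isT))).
  by rewrite (expectB P one (b 0%N isT)) expect_cst.
- by rewrite (expectZl P _ (b 1%N isT)).
- by rewrite (expectZl P _ (b 2%N isT)).
Qed.

Lemma expect_fidelity s : dot 3 s s <= 1 ->
  expect P (fun t => fidelity (X t) (of_bloch s)) =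
  2^-1 * (1 + dot 4 mean_sphere_lift (sphere_lift 3 s)).
Proof.
move=> s1; set F := fun t => dot 4 (sphere_lift 3 (bloch (X t))) (sphere_lift 3 s).
rewrite (@eq_expect _ _ _ P _ (fun t => 2^-1 * (1 + F t))); last first.
  by move=> t; have [X_E r1] := random_density_bloch t; rewrite {1}X_E fidelity_of_bloch.
have FB : bounded_measurable F.
  apply: (bounded_measurable_sum
    (F := fun i t => sphere_lift 3 (bloch (X t)) i * sphere_lift 3 s i)) => i lt_i4.
  exact: bounded_measurableM (bounded_measurable_sphere_lift lt_i4) (bounded_measurable_cst _ _).
have one := bounded_measurable_cst T (1 : R).
rewrite (expectZl P _ (bounded_measurableD one FB)) (expectD P one FB) expect_cst.
by rewrite /F (expect_dot P _ (fun i lt_i4 => bounded_measurable_sphere_lift lt_i4)).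
Qed.

Lemma expect_sqrt_linear_entropy :
  expect P (fun t => Num.sqrt (1 - Re (\tr (X t *m X t)))) = Num.sqrt 2^-1 * mean_sphere_lift 3.
Proof.
rewrite -expectZl; last exact: bounded_measurable_sphere_lift.
apply: eq_expect => t; have [X_E r1] := random_density_bloch t.
rewrite {1 2}X_E Re_mxtrace_of_bloch /sphere_lift /= -sqrtrM ?invr_ge0 //.
by congr Num.sqrt; field.
Qed.

Lemma dot_mean_sphere_lift :
  let rhohat := mexpect P X in
  let p := expect P (fun t => Num.sqrt (1 - Re (\tr (X t *m X t)))) in
  2 * (p ^+ 2 + Re (\tr (rhohat *m rhohat))) - 1 = dot 4 mean_sphere_lift mean_sphere_lift.
Proof.
rewrite /= mexpect_random_density expect_sqrt_linear_entropy Re_mxtrace_of_bloch.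
by rewrite exprMn sqr_sqrtr ?invr_ge0 // [RHS]dotS; field.
Qed.

Lemma expect_fidelity_le sigma : density sigma ->
  expect P (fun t => fidelity (X t) sigma) <=
  2^-1 * (1 + Num.sqrt (dot 4 mean_sphere_lift mean_sphere_lift)).
Proof.
move=> /density_bloch [sigma_E s1]; rewrite sigma_E expect_fidelity // ler_pM2l ?invr_gt0 //.
by rewrite lerD2l dot_le_sqrt // dot_sphere_lift_self.
Qed.

Lemma depolarized_mean_optimal : 0 < dot 4 mean_sphere_lift mean_sphere_lift ->
  let sigma := 2^-1%:M + ((Num.sqrt (dot 4 mean_sphere_lift mean_sphere_lift)^-1)%:C)%C *:
    (mexpect P X - 2^-1%:M) in
  density sigma /\ expect P (fun t => fidelity (X t) sigma) =
    2^-1 * (1 + Num.sqrt (dot 4 mean_sphere_lift mean_sphere_lift)).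
Proof.
move=> u_gt0 /=; have [k_le1 dot_k] := dot_sphere_lift_normalized mean_sphere_lift_ge0 u_gt0.
rewrite mexpect_random_density depolarize_of_bloch sqrtrV ?ltW //.
by split; [exact/density_of_blochP | rewrite expect_fidelity // dot_k].
Qed.

Lemma maximally_mixed_optimal : dot 4 mean_sphere_lift mean_sphere_lift = 0 ->
  density (of_bloch (fun=> 0 : R)) /\
  expect P (fun t => fidelity (X t) (of_bloch (fun=> 0))) =
    2^-1 * (1 + Num.sqrt (dot 4 mean_sphere_lift mean_sphere_lift)).
Proof.
move=> u0; have mixed1 : dot 3 (fun=> 0 : R) (fun=> 0) <= 1.
  by rewrite dot3E !mulr0 !addr0 ler01.
split; first exact/density_of_blochP.
have := sqr_dot_le mean_sphere_lift (dot_sphere_lift_self mixed1); rewrite u0 => sq_le0.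
have dot0 : dot 4 mean_sphere_lift (sphere_lift 3 (fun=> 0)) = 0.
  by apply/eqP; rewrite -sqrf_eq0 eq_le sq_le0 sqr_ge0.
by rewrite expect_fidelity // dot0 sqrtr0.
Qed.

End RandomDensity.

Local Close Scope complex_scope.

Theorem corollary1 (R : realType) (d : measure_display) (T : measurableType d)
  (P : probability T R) (X : T -> 'M[R[i]]_2) :
  random_density X ->
  let rhohat := mexpect P X in
  let p := expect P (fun t => Num.sqrt (1 - complex.Re (\tr (X t *m X t)))) in
  let c := 2 * (p ^+ 2 + complex.Re (\tr (rhohat *m rhohat))) - 1 in
  let v := 2^-1 * (1 + Num.sqrt c) in
  ((forall sigma : 'M[R[i]]_2, density sigma ->
      expect P (fun t => fidelity (X t) sigma) <= v) /\
   (exists2 sigma : 'M[R[i]]_2, density sigma &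
      expect P (fun t => fidelity (X t) sigma) = v)) /\
  (0 < c ->
   let sigma_sharp : 'M[R[i]]_2 :=
     2^-1%:M + ((Num.sqrt c^-1)%:C)%C *: (rhohat - 2^-1%:M) in
   density sigma_sharp /\
   expect P (fun t => fidelity (X t) sigma_sharp) = v).
Proof.
move=> X_random rhohat p c v; set u := mean_sphere_lift P X.
have c_E : c = dot 4 u u by exact: dot_mean_sphere_lift.
rewrite /v /rhohat c_E.
split; last exact: depolarized_mean_optimal.
split; first by move=> sigma; exact: expect_fidelity_le.
have [u_gt0|u_le0] := ltrP 0 (dot 4 u u).
  by have [? ?] := depolarized_mean_optimal X_random u_gt0; eexists; eassumption.
have u0 : dot 4 u u = 0 by apply/eqP; rewrite eq_le u_le0 dot_ge0.
by have [? ?] := maximally_mixed_optimal X_random u0; eexists; eassumption.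
Qed.
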